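(* Let $\Gamma$ be a group with finite symmetric generating set $S$ acting on a countably infinite set $X$, let $\mu$ be a $\Gamma$-invariant mean on $X$, and let $R$ be a subgraph of the Schreier graph $S_\Gamma$ all of whose connected components have at most $C$ vertices. Suppose that in every component of $R$ the number of edges divided by the number of vertices is at least $\alpha$. Then $\alpha\,\mu(V(R))\le\mu_E(R)$.
   Context: A mean on $X$ is a finitely additive $\mu:2^X\to[0,1]$ with $\mu(X)=1$; $\Gamma$-invariant means $\mu(\gamma A)=\mu(A)$ for all $\gamma,A$. The Schreier graph $S_\Gamma$ has vertex set $X$ and an edge $\{x,y\}$ when $x\neq y$ and $s(x)=y$ for some $s\in S$. For a subgraph $R$, $\deg_R(x)$ is the degree of $x$ in $R$ ($0$ for $x\notin V(R)$) and $\mu_E(R)=\frac12\sum_{k\ge0}k\,\mu(\{x:\deg_R(x)=k\})$. *)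

From Stdlib Require Import Reals List Relations.
Open Scope R_scope.

Definition card_eq {T : Type} (P : T -> Prop) (n : nat) : Prop :=
  exists l : list T, NoDup l /\ length l = n /\ (forall x, In x l <-> P x).

Definition is_group {G : Type} (e : G) (mul : G -> G -> G) (inv : G -> G) : Prop :=
  (forall a b c, mul a (mul b c) = mul (mul a b) c) /\
  (forall a, mul e a = a /\ mul a e = a) /\
  (forall a, mul (inv a) a = e /\ mul a (inv a) = e).

Definition is_action {G X : Type} (e : G) (mul : G -> G -> G) (act : G -> X -> X) : Prop :=
  (forall x, act e x = x) /\ (forall g h x, act (mul g h) x = act g (act h x)).

Definition sym_gen_set {G : Type} (e : G) (mul : G -> G -> G) (inv : G -> G)
  (S : list G) : Prop :=
  (forall s, In s S -> In (inv s) S) /\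
  (forall g, exists l : list G, (forall s, In s l -> In s S) /\ fold_right mul e l = g).

Definition countably_infinite (X : Type) : Prop :=
  exists f : nat -> X, (forall m n, f m = f n -> m = n) /\ (forall x, exists n, f n = x).

Definition is_mean {X : Type} (mu : (X -> Prop) -> R) : Prop :=
  (forall A, 0 <= mu A <= 1) /\
  mu (fun _ => True) = 1 /\
  (forall A B, (forall x, A x -> B x -> False) ->
     mu (fun x => A x \/ B x) = mu A + mu B).

Definition act_image {G X : Type} (act : G -> X -> X) (g : G) (A : X -> Prop) : X -> Prop :=
  fun y => exists x, A x /\ y = act g x.

Definition invariant_mean {G X : Type} (act : G -> X -> X) (mu : (X -> Prop) -> R) : Prop :=
  forall g A, mu (act_image act g A) = mu A.

Definition schreier_edge {G X : Type} (act : G -> X -> X) (S : list G) (x y : X) : Prop :=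
  x <> y /\ exists s, In s S /\ act s x = y.

Definition schreier_subgraph {G X : Type} (act : G -> X -> X) (S : list G)
  (VR : X -> Prop) (ER : X -> X -> Prop) : Prop :=
  (forall x y, ER x y -> ER y x) /\
  (forall x y, ER x y -> VR x /\ VR y /\ schreier_edge act S x y).

(* deg_R(x) = k  (automatically 0 for x not in V(R)). *)
Definition deg_eq {X : Type} (ER : X -> X -> Prop) (x : X) (k : nat) : Prop :=
  card_eq (ER x) k.

Definition component {X : Type} (ER : X -> X -> Prop) (x : X) : X -> Prop :=
  fun y => clos_refl_trans X ER x y.

(* Ordered pairs (y,z) with y in the component of x and {y,z} an edge;
   their number is twice the number of edges of the component. *)
Definition component_darts {X : Type} (ER : X -> X -> Prop) (x : X) : X * X -> Prop :=
  fun p => component ER x (fst p) /\ ER (fst p) (snd p).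

(* mu_E(R) = 1/2 sum_k k mu{x : deg_R x = k}; degrees are bounded by |S|,
   so the sum is truncated at k = length S (all later terms are mu(empty) = 0). *)
Definition mu_E {X : Type} (mu : (X -> Prop) -> R) (ER : X -> X -> Prop) (D : nat) : R :=
  / 2 * sum_f_R0 (fun k => INR k * mu (fun x => deg_eq ER x k)) D.

(* Proof by mass transport.  Let f(y) = deg_R(y)/2 - alpha on V(R) and f = 0 elsewhere;
   mu_E(R) - alpha mu(V(R)) is the mu-integral of f, a function with finitely many
   values, so it suffices to show that this integral is nonnegative.  A component of at
   most C vertices is swept out from any of its points x by the finite list W of words
   of length <= C in S; every y in the component of x is w_i x for a least index i.
   Sending the mass f(y) from y back to all points x of its component, split into equal
   shares, produces the function x |-> (1/|K_x|) sum_{y in K_x} f(y) =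
   |E(K_x)|/|K_x| - alpha >= 0.  The transport moves the level pieces of a simple
   function by group elements, which invariance of mu turns into an equality of
   integrals, and positivity of the mean finishes the argument. *)

From Stdlib Require Import Reals List Relations Wf_nat Permutation Lra Lia
  Classical ClassicalEpsilon FunctionalExtensionality PropExtensionality.
Open Scope R_scope.

Definition ind (P : Prop) : R := if excluded_middle_informative P then 1 else 0.

Lemma ind_true (P : Prop) : P -> ind P = 1.
Proof. unfold ind; destruct excluded_middle_informative; tauto. Qed.

Lemma ind_false (P : Prop) : ~ P -> ind P = 0.
Proof. unfold ind; destruct excluded_middle_informative; tauto. Qed.

Lemma ind_iff (P Q : Prop) : (P <-> Q) -> ind P = ind Q.
Proof. intros H; unfold ind; do 2 destruct excluded_middle_informative; tauto. Qed.

Fixpoint sumR {T : Type} (l : list T) (f : T -> R) : R :=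
  match l with nil => 0 | a :: l' => f a + sumR l' f end.

Lemma sumR_ext {T} (l : list T) f g :
  (forall a, In a l -> f a = g a) -> sumR l f = sumR l g.
Proof. induction l; simpl; intros H; auto. rewrite H, IHl; auto. Qed.

Lemma sumR_plus {T} (l : list T) f g :
  sumR l (fun a => f a + g a) = sumR l f + sumR l g.
Proof. induction l; simpl; lra. Qed.

Lemma sumR_scal {T} (l : list T) c f : sumR l (fun a => c * f a) = c * sumR l f.
Proof. induction l; simpl; lra. Qed.

Lemma sumR_const {T} (l : list T) c : sumR l (fun _ => c) = INR (length l) * c.
Proof. induction l; simpl length; rewrite ?S_INR; simpl; lra. Qed.

Lemma sumR_zero {T} (l : list T) f : (forall a, In a l -> f a = 0) -> sumR l f = 0.
Proof. intros H. rewrite (sumR_ext l f (fun _ => 0)) by auto. rewrite sumR_const; lra. Qed.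

Lemma sumR_app {T} (l1 l2 : list T) f : sumR (l1 ++ l2) f = sumR l1 f + sumR l2 f.
Proof. induction l1; simpl; lra. Qed.

Lemma sumR_map {T U} (l : list T) (h : T -> U) f :
  sumR (map h l) f = sumR l (fun a => f (h a)).
Proof. induction l; simpl; congruence. Qed.

Lemma sumR_flat_map {T U} (l : list T) (h : T -> list U) f :
  sumR (flat_map h l) f = sumR l (fun a => sumR (h a) f).
Proof. induction l; simpl; auto. rewrite sumR_app; congruence. Qed.

Lemma sumR_perm {T} (l l' : list T) f : Permutation l l' -> sumR l f = sumR l' f.
Proof. induction 1; simpl; lra. Qed.

Lemma sum_f_R0_sumR (f : nat -> R) D : sum_f_R0 f D = sumR (seq 0 (S D)) f.
Proof.
  induction D; [simpl; lra|].
  rewrite seq_S, sumR_app; simpl. rewrite IHD; simpl; lra.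
Qed.

Lemma sumR_filter {T} (l : list T) (Q : T -> Prop) f :
  sumR l (fun a => ind (Q a) * f a) =
  sumR (filter (fun a => if excluded_middle_informative (Q a) then true else false) l) f.
Proof.
  induction l; simpl; auto.
  unfold ind at 1; destruct excluded_middle_informative; simpl; rewrite IHl; lra.
Qed.

Lemma sumR_reindex {I Y : Type} (L : list I) (lK : list Y) (Q : I -> Prop)
    (h : I -> Y) (phi : Y -> R) :
  NoDup L -> NoDup lK ->
  (forall i j, In i L -> In j L -> Q i -> Q j -> h i = h j -> i = j) ->
  (forall y, In y lK <-> exists i, In i L /\ Q i /\ h i = y) ->
  sumR L (fun i => ind (Q i) * phi (h i)) = sumR lK phi.
Proof.
  intros HL HK Hinj Him.
  set (q := fun i => if excluded_middle_informative (Q i) then true else false).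
  assert (Hq : forall i, q i = true <-> Q i)
    by (intros i; unfold q; destruct excluded_middle_informative; split; congruence || tauto).
  rewrite sumR_filter, <- (sumR_map _ h phi). fold q.
  apply sumR_perm, NoDup_Permutation; auto.
  - apply NoDup_map_NoDup_ForallPairs; [|apply NoDup_filter; auto].
    intros a b Ha Hb. apply filter_In in Ha, Hb. rewrite Hq in Ha, Hb.
    apply Hinj; tauto.
  - intros y; rewrite in_map_iff, Him. split.
    + intros [i [Hi Hy]]. apply filter_In in Hy. rewrite Hq in Hy. exists i; tauto.
    + intros [i [Hi [Qi Hy]]]. exists i. rewrite filter_In, Hq. auto.
Qed.

Lemma sumR_select (B : nat) (Q : Prop) (a : nat) (f : nat -> R) :
  (Q -> (a <= B)%nat) ->
  sumR (seq 0 (S B)) (fun n => ind (Q /\ n = a) * f n) = ind Q * f a.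
Proof.
  intros HQ. destruct (classic Q) as [q|nq].
  - assert (Ha : In a (seq 0 (S B))) by (apply in_seq; specialize (HQ q); lia).
    pose proof (seq_NoDup (S B) 0) as Hn. rewrite (ind_true Q q).
    induction (seq 0 (S B)) as [|b L IH]; simpl in *; [contradiction|].
    inversion Hn; subst. destruct Ha as [->|Ha].
    + rewrite ind_true, sumR_zero by (auto || (intros c Hc; rewrite ind_false; [lra|];
        intros [_ ->]; contradiction)). lra.
    + rewrite ind_false, IH by (auto || (intros [_ ->]; contradiction)). lra.
  - rewrite ind_false, sumR_zero by (auto || (intros c _; rewrite ind_false; [lra|tauto])).
    lra.
Qed.

Definition grid3 {A : Type} (N K M : nat) (F : nat -> nat -> nat -> A) : list A :=
  flat_map (fun i => flat_map (fun k => map (F i k) (seq 0 M)) (seq 0 K)) (seq 0 N).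

Lemma sumR_grid3 {A} N K M (F : nat -> nat -> nat -> A) g :
  sumR (grid3 N K M F) g =
  sumR (seq 0 N) (fun i => sumR (seq 0 K) (fun k => sumR (seq 0 M) (fun n => g (F i k n)))).
Proof.
  unfold grid3. rewrite sumR_flat_map. apply sumR_ext; intros i _.
  rewrite sumR_flat_map. apply sumR_ext; intros k _. apply sumR_map.
Qed.

Section Mean.
Context {X : Type} (mu : (X -> Prop) -> R).

Lemma mu_ext (A B : X -> Prop) : (forall x, A x <-> B x) -> mu A = mu B.
Proof.
  intros H. f_equal. apply functional_extensionality; intros x.
  apply propositional_extensionality; auto.
Qed.

Hypothesis Hm : is_mean mu.

Lemma mu_empty (A : X -> Prop) : (forall x, ~ A x) -> mu A = 0.
Proof.
  intros H. destruct Hm as [_ [_ Hadd]].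
  assert (E : mu A = mu A + mu A).
  { rewrite <- Hadd by (intros x Ax _; exact (H x Ax)). apply mu_ext; tauto. }
  lra.
Qed.

Lemma mu_split (Z A : X -> Prop) :
  mu Z = mu (fun x => Z x /\ A x) + mu (fun x => Z x /\ ~ A x).
Proof.
  destruct Hm as [_ [_ Hadd]]. rewrite <- Hadd by tauto.
  apply mu_ext; intros x. pose proof (classic (A x)); tauto.
Qed.

(* A simple function is a list of weighted sets (c, A), standing for sum c 1_A;
   [integral] is its integral against mu and [value] its value at a point. *)
Definition integral (l : list (R * (X -> Prop))) : R :=
  sumR l (fun p => fst p * mu (snd p)).
Definition value (l : list (R * (X -> Prop))) (x : X) : R :=
  sumR l (fun p => ind (snd p x) * fst p).

(* Positivity of the mean, localised to a set Z and with a constant c added.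
   The induction splits Z along the set of the first weighted pair. *)
Lemma integral_nonneg_on (l : list (R * (X -> Prop))) :
  forall (Z : X -> Prop) c, (forall x, Z x -> 0 <= c + value l x) ->
  0 <= c * mu Z + sumR l (fun p => fst p * mu (fun x => snd p x /\ Z x)).
Proof.
  induction l as [|[w A] l IH]; intros Z c HZ; simpl.
  - destruct (classic (exists x, Z x)) as [[x Hx]|Hn].
    + specialize (HZ x Hx); unfold value in HZ; simpl in HZ.
      destruct Hm as [H01 _]. specialize (H01 Z). nra.
    + rewrite (mu_empty Z) by (intros x Hx; eauto). lra.
  - assert (HA : 0 <= (c + w) * mu (fun x => Z x /\ A x) +
       sumR l (fun p => fst p * mu (fun x => snd p x /\ (Z x /\ A x)))).
    { apply IH. intros x [Zx Ax]. specialize (HZ x Zx).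
      unfold value in HZ |- *; simpl in HZ. rewrite ind_true in HZ by auto. lra. }
    assert (HnA : 0 <= c * mu (fun x => Z x /\ ~ A x) +
       sumR l (fun p => fst p * mu (fun x => snd p x /\ (Z x /\ ~ A x)))).
    { apply IH. intros x [Zx Ax]. specialize (HZ x Zx).
      unfold value in HZ |- *; simpl in HZ. rewrite ind_false in HZ by auto. lra. }
    rewrite (mu_split Z A), (mu_ext (fun x => A x /\ Z x) (fun x => Z x /\ A x)) by tauto.
    rewrite (sumR_ext l _ (fun p => fst p * mu (fun x => snd p x /\ (Z x /\ A x)) +
        fst p * mu (fun x => snd p x /\ (Z x /\ ~ A x)))), sumR_plus; [lra|].
    intros p _. rewrite (mu_split (fun x => snd p x /\ Z x) A), <- Rmult_plus_distr_l.
    f_equal. f_equal; apply mu_ext; tauto.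
Qed.

Lemma integral_nonneg (l : list (R * (X -> Prop))) :
  (forall x, 0 <= value l x) -> 0 <= integral l.
Proof.
  intros H. pose proof (integral_nonneg_on l (fun _ => True) 0) as P.
  unfold integral. rewrite (sumR_ext l _ (fun p => fst p * mu (fun x => snd p x /\ True))).
  - enough (0 <= 0 * mu (fun _ => True) + sumR l (fun p => fst p * mu (fun x => snd p x /\ True)))
      by lra.
    apply P. intros x _. specialize (H x). lra.
  - intros p _. f_equal. apply mu_ext. tauto.
Qed.

Definition negate (l : list (R * (X -> Prop))) : list (R * (X -> Prop)) :=
  map (fun p => (- fst p, snd p)) l.

Lemma integral_mono (l1 l2 : list (R * (X -> Prop))) :
  (forall x, value l1 x <= value l2 x) -> integral l1 <= integral l2.
Proof.
  intros H. pose proof (integral_nonneg (l2 ++ negate l1)) as P.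
  unfold integral, value, negate in *.
  rewrite sumR_app, sumR_map in P. cbn [fst snd] in P.
  rewrite (sumR_ext l1 (fun p => - fst p * mu (snd p)) (fun p => -1 * (fst p * mu (snd p)))),
    sumR_scal in P by (intros; ring).
  enough (0 <= sumR l2 (fun p => fst p * mu (snd p)) + -1 * sumR l1 (fun p => fst p * mu (snd p)))
    by lra.
  apply P. intros x. rewrite sumR_app, sumR_map. cbn [fst snd].
  rewrite (sumR_ext l1 (fun p => ind (snd p x) * - fst p) (fun p => -1 * (ind (snd p x) * fst p))),
    sumR_scal by (intros; ring).
  specialize (H x). lra.
Qed.

End Mean.

Definition finite {T : Type} (P : T -> Prop) : Prop := exists l, forall z, P z -> In z l.

Lemma finite_enumerable {T} (P : T -> Prop) :
  finite P -> exists l, NoDup l /\ forall z, In z l <-> P z.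
Proof.
  intros [l HP]. revert P HP. induction l as [|a l IH]; intros P HP.
  - exists nil; split; [constructor|]. intros z; split; [simpl; tauto|]. apply HP.
  - destruct (IH (fun x => P x /\ x <> a)) as [l' [Hn Hl']].
    { intros x [Px Ha]. destruct (HP x Px) as [E|E]; [congruence|exact E]. }
    destruct (classic (P a)) as [Pa|nPa].
    + exists (a :: l'); split.
      * constructor; auto. rewrite Hl'. tauto.
      * intros z; simpl; rewrite Hl'. split; [intros [->|[]]; auto|].
        intros Pz; destruct (classic (a = z)); auto.
    + exists l'; split; auto. intros z; rewrite Hl'; split; [tauto|].
      intros Pz; split; auto. intros ->; contradiction.
Qed.

Lemma card_finite {T} (P : T -> Prop) n : card_eq P n -> finite P.
Proof. intros [l [_ [_ Hl]]]. exists l; intros z; apply Hl. Qed.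

Lemma card_of_list {T} (P : T -> Prop) l :
  NoDup l -> (forall z, In z l <-> P z) -> card_eq P (length l).
Proof. intros; exists l; auto. Qed.

Lemma card_unique {T} (P : T -> Prop) n m : card_eq P n -> card_eq P m -> n = m.
Proof.
  intros [l1 [N1 [L1 H1]]] [l2 [N2 [L2 H2]]]. subst.
  apply Permutation_length, NoDup_Permutation; auto.
  intros x; rewrite H1, H2; tauto.
Qed.

Lemma card_eq_ext {T} (P Q : T -> Prop) n :
  (forall z, P z <-> Q z) -> card_eq P n -> card_eq Q n.
Proof. intros H [l [Hn [Hl Hin]]]. exists l. split; [|split]; auto. intros z. rewrite Hin; auto. Qed.

Definition enum {T : Type} (P : T -> Prop) : list T :=
  epsilon (inhabits nil) (fun l => NoDup l /\ forall z, In z l <-> P z).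

Lemma enum_spec {T} (P : T -> Prop) :
  finite P -> NoDup (enum P) /\ forall z, In z (enum P) <-> P z.
Proof. intros H. unfold enum. apply epsilon_spec, finite_enumerable, H. Qed.

Lemma enum_card {T} (P : T -> Prop) : finite P -> card_eq P (length (enum P)).
Proof. intros H. destruct (enum_spec P H). apply card_of_list; auto. Qed.

Section Graph.
Context {X : Type} (ER : X -> X -> Prop).

Definition locally_finite : Prop := forall x, finite (ER x).
Definition degf (x : X) : nat := length (enum (ER x)).
Definition compf (x : X) : nat := length (enum (component ER x)).

Lemma deg_eq_iff x k : locally_finite -> (deg_eq ER x k <-> k = degf x).
Proof.
  intros Hlf. pose proof (enum_card (ER x) (Hlf x)) as Hc.
  split; [intros H; apply (card_unique _ _ _ H Hc)|intros ->; exact Hc].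
Qed.

Lemma component_trans x y z : component ER x y -> component ER y z -> component ER x z.
Proof. apply rt_trans. Qed.

Hypothesis Hsym : forall a b, ER a b -> ER b a.

Lemma component_sym x y : component ER x y -> component ER y x.
Proof. induction 1; [apply rt_step; auto|apply rt_refl|eapply rt_trans; eauto]. Qed.

Lemma component_same x y : component ER x y -> forall z, component ER x z <-> component ER y z.
Proof.
  intros Hxy z; split; intros H.
  - apply (component_trans y x z); [apply component_sym|]; assumption.
  - apply (component_trans x y z); assumption.
Qed.

Lemma compf_same x y :
  finite (component ER x) -> component ER x y -> compf y = compf x.
Proof.
  intros Hfin Hxy. pose proof (enum_card _ Hfin) as Hc.
  assert (Hc' : card_eq (component ER y) (compf x))
    by (apply (card_eq_ext _ _ _ (component_same x y Hxy)), Hc).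
  apply (card_unique _ _ _ (enum_card _ (card_finite _ _ Hc')) Hc').
Qed.

Lemma handshake x m :
  locally_finite -> finite (component ER x) -> card_eq (component_darts ER x) m ->
  INR m = sumR (enum (component ER x)) (fun y => INR (degf y)).
Proof.
  intros Hlf Hfin Hm. destruct (enum_spec _ Hfin) as [Hn Hl].
  set (darts := flat_map (fun y => map (pair y) (enum (ER y))) (enum (component ER x))).
  assert (Hc : card_eq (component_darts ER x) (length darts)).
  { apply card_of_list.
    - unfold darts. clear Hl. induction (enum (component ER x)) as [|a l IH]; simpl.
      { constructor. }
      inversion Hn; subst. apply NoDup_app; [| |].
      + apply NoDup_map_NoDup_ForallPairs; [intros u v _ _ E; congruence|].
        apply (enum_spec _ (Hlf a)).
      + apply IH; auto.
      + intros [u v] HA HB. apply in_map_iff in HA. destruct HA as [w [E _]].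
        inversion E; subst. apply in_flat_map in HB. destruct HB as [b [Hb HB]].
        apply in_map_iff in HB. destruct HB as [w2 [E2 _]]. inversion E2; subst.
        contradiction.
    - intros [u v]. unfold darts, component_darts; simpl.
      rewrite in_flat_map. setoid_rewrite in_map_iff. split.
      + intros [b [Hb [w [E Hw]]]]. injection E as <- <-.
        split; [apply Hl; auto|apply (enum_spec _ (Hlf b)); auto].
      + intros [Hu Hv]. exists u; split; [apply Hl; auto|].
        exists v; split; auto. apply (enum_spec _ (Hlf u)); auto. }
  rewrite (card_unique _ _ _ Hm Hc). unfold darts, degf. clear.
  induction (enum (component ER x)); simpl; [reflexivity|].
  rewrite length_app, plus_INR, length_map, IHl. reflexivity.
Qed.

End Graph.

Section Schreier.
Context {G X : Type} (act : G -> X -> X) (S : list G) (VR : X -> Prop) (ER : X -> X -> Prop).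
Hypothesis Hsub : schreier_subgraph act S VR ER.

Lemma schreier_locally_finite : locally_finite ER.
Proof.
  intros x. exists (map (fun s => act s x) S). intros z Hz.
  destruct (proj2 Hsub _ _ Hz) as [_ [_ [_ [s [Hs <-]]]]]. apply (in_map (fun s => act s x)); auto.
Qed.

Lemma schreier_degf_bound x : (degf ER x <= length S)%nat.
Proof.
  destruct (enum_spec _ (schreier_locally_finite x)) as [Hn Hl].
  unfold degf. rewrite <- (length_map (fun s => act s x) S).
  apply NoDup_incl_length; auto. intros z Hz. apply Hl in Hz.
  destruct (proj2 Hsub _ _ Hz) as [_ [_ [_ [s [Hs <-]]]]]. apply (in_map (fun s => act s x)); auto.
Qed.

Lemma schreier_degf_off x : ~ VR x -> degf ER x = 0%nat.
Proof.
  intros Hx. destruct (enum_spec _ (schreier_locally_finite x)) as [_ Hl].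
  unfold degf. destruct (enum (ER x)) as [|a l]; auto.
  exfalso. apply Hx, (proj2 Hsub x a), Hl; simpl; auto.
Qed.

Lemma schreier_component_VR x y : VR x -> component ER x y -> VR y.
Proof. intros Hx H. induction H; auto. apply (proj2 Hsub _ _ H). Qed.

End Schreier.

Fixpoint reach {X : Type} (ER : X -> X -> Prop) (j : nat) (x y : X) : Prop :=
  match j with
  | O => x = y
  | S j' => reach ER j' x y \/ exists z, reach ER j' x z /\ ER z y
  end.

Lemma reach_mono {X} (ER : X -> X -> Prop) j k x y :
  (j <= k)%nat -> reach ER j x y -> reach ER k x y.
Proof. induction 1; simpl; auto. Qed.

Lemma reach_component {X} (ER : X -> X -> Prop) j x y : reach ER j x y -> component ER x y.
Proof.
  revert y; induction j; simpl; intros y H.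
  - subst; apply rt_refl.
  - destruct H as [H|[z [H1 H2]]]; auto.
    eapply rt_trans; [apply IHj, H1|apply rt_step, H2].
Qed.

(* In a component of n vertices every vertex is reached within n steps: the balls
   around x grow strictly until they are closed under ER, and cannot exceed n points. *)
Lemma reach_bound {X} (ER : X -> X -> Prop) x n y :
  card_eq (component ER x) n -> component ER x y -> reach ER n x y.
Proof.
  intros [lK [HK [HL Hin]]] Hy.
  assert (Grow : forall j, (forall y, component ER x y -> reach ER j x y) \/
     (exists l, NoDup l /\ length l = S j /\ forall y, In y l -> reach ER j x y)).
  { induction j as [|j IH].
    - right. exists (x :: nil). split; [constructor; [simpl; tauto|constructor]|].
      split; auto. intros y0 [<-|[]]; simpl; auto.
    - destruct IH as [IH|[l [Hn [Hl Hr]]]]; [left; intros y0 H0; simpl; auto|].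
      destruct (classic (exists y0, reach ER (S j) x y0 /\ ~ reach ER j x y0))
        as [[y0 [H1 H2]]|Hclosed].
      + right. exists (y0 :: l). split; [constructor; auto|].
        split; simpl; auto. intros y1 [<-|Hy1]; auto.
      + left. intros y0 H0. simpl; left.
        apply clos_rt_rtn1 in H0. induction H0; [apply (reach_mono ER 0); [lia|reflexivity]|].
        apply NNPP; intros Hn'. apply Hclosed. exists z; split; auto.
        simpl; right; eauto. }
  destruct (Grow n) as [H|[l [Hn [Hl Hr]]]]; auto.
  exfalso. assert (length l <= length lK)%nat.
  { apply NoDup_incl_length; auto. intros z Hz. apply Hin, (reach_component ER n), Hr, Hz. }
  lia.
Qed.

Fixpoint words {G : Type} (e : G) (mul : G -> G -> G) (S : list G) (j : nat) : list G :=
  match j with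
  | O => e :: nil
  | S j' => words e mul S j' ++ flat_map (fun g => map (fun s => mul s g) S) (words e mul S j')
  end.

Lemma words_reach {G X} e mul (act : G -> X -> X) S VR ER j x y :
  is_action e mul act -> schreier_subgraph act S VR ER ->
  reach ER j x y -> exists g, In g (words e mul S j) /\ act g x = y.
Proof.
  intros [Ha1 Ha2] [_ Hs]. revert y; induction j; simpl; intros y H.
  - subst. exists e; auto.
  - destruct H as [H|[z [H1 H2]]].
    + destruct (IHj y H) as [g [Hg E]]. exists g; split; auto. apply in_or_app; auto.
    + destruct (IHj z H1) as [g [Hg <-]].
      destruct (Hs _ _ H2) as [_ [_ [_ [s [Hs1 <-]]]]].
      exists (mul s g); split; [|apply Ha2].
      apply in_or_app; right. apply in_flat_map. exists g; split; auto.
      apply (in_map (fun s0 => mul s0 g)); auto.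
Qed.

Definition first_hit {G X : Type} (e : G) (act : G -> X -> X) (ER : X -> X -> Prop)
    (W : list G) (x : X) (i : nat) : Prop :=
  component ER x (act (nth i W e) x) /\
  forall j, (j < i)%nat -> act (nth j W e) x <> act (nth i W e) x.

Lemma first_hit_inj {G X} e (act : G -> X -> X) ER W x i j :
  first_hit e act ER W x i -> first_hit e act ER W x j ->
  act (nth i W e) x = act (nth j W e) x -> i = j.
Proof.
  intros [_ Hi] [_ Hj] E.
  destruct (Nat.lt_total i j) as [H|[H|H]]; auto; exfalso.
  - exact (Hj i H E).
  - exact (Hi j H (eq_sym E)).
Qed.

Lemma first_hit_exists {G X} e mul (act : G -> X -> X) S VR ER C n x y :
  is_action e mul act -> schreier_subgraph act S VR ER ->
  card_eq (component ER x) n -> (n <= C)%nat -> component ER x y ->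
  exists i, (i < length (words e mul S C))%nat /\
    first_hit e act ER (words e mul S C) x i /\ act (nth i (words e mul S C) e) x = y.
Proof.
  intros Ha Hsub Hn HnC Hxy. set (W := words e mul S C).
  pose proof (reach_mono ER _ _ x y HnC (reach_bound ER x n y Hn Hxy)) as Hr.
  destruct (words_reach e mul act S VR ER C x y Ha Hsub Hr) as [g [Hg Eg]].
  destruct (In_nth W g e Hg) as [i [Hi Ei]].
  destruct (dec_inh_nat_subset_has_unique_least_element (fun j => act (nth j W e) x = y))
    as [m [[Hm Hleast] _]].
  - intros j. apply classic.
  - exists i. fold W in Ei. rewrite Ei. exact Eg.
  - assert (m <= i)%nat by (apply Hleast; fold W in Ei; rewrite Ei; exact Eg).
    exists m. split; [lia|]. split; auto. split.
    + rewrite Hm; auto.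
    + intros j Hj E. rewrite Hm in E. specialize (Hleast j E). lia.
Qed.

Lemma act_inv_l {G X} e mul inv (act : G -> X -> X) g x :
  is_group e mul inv -> is_action e mul act -> act (inv g) (act g x) = x.
Proof. intros [_ [_ Hi]] [Ha1 Ha2]. rewrite <- Ha2, (proj1 (Hi g)). auto. Qed.

Lemma act_inv_r {G X} e mul inv (act : G -> X -> X) g x :
  is_group e mul inv -> is_action e mul act -> act g (act (inv g) x) = x.
Proof. intros [_ [_ Hi]] [Ha1 Ha2]. rewrite <- Ha2, (proj2 (Hi g)). auto. Qed.

Lemma act_image_iff {G X} e mul inv (act : G -> X -> X) g (A : X -> Prop) y :
  is_group e mul inv -> is_action e mul act ->
  (act_image act g A y <-> A (act (inv g) y)).
Proof.
  intros Hg Ha. unfold act_image. split.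
  - intros [x [Ax ->]]. rewrite (act_inv_l e mul inv); auto.
  - intros H. exists (act (inv g) y). split; auto. rewrite (act_inv_r e mul inv); auto.
Qed.

Lemma hits_enumerate_component {G X} e mul (act : G -> X -> X) S VR ER C n x
    (phi : X -> R) :
  is_action e mul act -> schreier_subgraph act S VR ER ->
  card_eq (component ER x) n -> (n <= C)%nat ->
  sumR (seq 0 (length (words e mul S C)))
    (fun i => ind (first_hit e act ER (words e mul S C) x i) *
              phi (act (nth i (words e mul S C) e) x))
  = sumR (enum (component ER x)) phi.
Proof.
  intros Ha Hsub Hn HnC. set (W := words e mul S C).
  destruct (enum_spec _ (card_finite _ _ Hn)) as [Hnd Hl].
  apply (sumR_reindex _ _ (first_hit e act ER W x) (fun i => act (nth i W e) x));
    [apply seq_NoDup|auto| |].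
  - intros i j _ _ Hi Hj. apply (first_hit_inj e act ER W x i j Hi Hj).
  - intros y. rewrite Hl. split.
    + intros Hy. destruct (first_hit_exists e mul act S VR ER C n x y Ha Hsub Hn HnC Hy)
        as [i [Hi [Hh E]]]. fold W in Hi.
      exists i. split; [apply in_seq; lia|]. auto.
    + intros [i [_ [[Hc _] <-]]]. exact Hc.
Qed.

Lemma hits_count_translates {G X} e mul inv (act : G -> X -> X) S VR ER C n y :
  is_group e mul inv -> is_action e mul act -> schreier_subgraph act S VR ER ->
  card_eq (component ER y) n -> (n <= C)%nat ->
  sumR (seq 0 (length (words e mul S C)))
    (fun i => ind (first_hit e act ER (words e mul S C)
                     (act (inv (nth i (words e mul S C) e)) y) i) * 1)
  = INR (compf ER y).
Proof.
  intros Hg Ha Hsub Hn HnC. set (W := words e mul S C).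
  assert (Hsym := proj1 Hsub).
  assert (Hback : forall i, act (nth i W e) (act (inv (nth i W e)) y) = y)
    by (intros; apply (act_inv_r e mul inv); auto).
  destruct (enum_spec _ (card_finite _ _ Hn)) as [Hnd Hl].
  unfold compf. rewrite <- (Rmult_1_r (INR _)), <- sumR_const.
  apply (sumR_reindex _ _ (fun i => first_hit e act ER W (act (inv (nth i W e)) y) i)
           (fun i => act (inv (nth i W e)) y) (fun _ => 1)); [apply seq_NoDup|auto| |].
  - intros i j _ _ Hi Hj E. rewrite <- E in Hj.
    apply (first_hit_inj e act ER W _ i j Hi Hj). rewrite Hback, E, Hback. reflexivity.
  - intros x. rewrite Hl. split.
    + intros Hyx. assert (Hxy : component ER x y) by (apply component_sym; auto).
      assert (Hnx : card_eq (component ER x) n)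
        by (apply (card_eq_ext _ _ _ (component_same ER Hsym y x Hyx)), Hn).
      destruct (first_hit_exists e mul act S VR ER C n x y Ha Hsub Hnx HnC Hxy)
        as [i [Hi [Hh <-]]]. fold W in Hi, Hh.
      exists i. rewrite (act_inv_l e mul inv) by auto.
      split; [apply in_seq; lia|auto].
    + intros [i [_ [[Hc _] <-]]]. rewrite Hback in Hc. apply component_sym; auto.
Qed.

Section Transport.
Variables (G X : Type) (e : G) (mul : G -> G -> G) (inv : G -> G) (act : G -> X -> X)
  (gens : list G) (mu : (X -> Prop) -> R) (VR : X -> Prop) (ER : X -> X -> Prop)
  (C : nat) (alpha : R).
Hypothesis Hg : is_group e mul inv.
Hypothesis Ha : is_action e mul act.
Hypothesis Hm : is_mean mu.
Hypothesis Hinv : invariant_mean act mu.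
Hypothesis Hsub : schreier_subgraph act gens VR ER.
Hypothesis Hcomp : forall x, VR x -> exists n m : nat,
  card_eq (component ER x) n /\ (n <= C)%nat /\
  card_eq (component_darts ER x) m /\ alpha <= (INR m / 2) / INR n.

Local Notation W := (words e mul gens C).
Local Notation w i := (nth i W e).
Local Notation hit x i := (first_hit e act ER W x i).
Local Notation D := (length gens).

Lemma component_bounded x : VR x -> exists n, card_eq (component ER x) n /\ (n <= C)%nat.
Proof. intros Hx. destruct (Hcomp x Hx) as [n [m [Hn [HnC _]]]]; eauto. Qed.

Lemma compf_eq x n : card_eq (component ER x) n -> compf ER x = n.
Proof. intros Hn. apply (card_unique _ _ _ (enum_card _ (card_finite _ _ Hn)) Hn). Qed.

Lemma compf_range x : VR x -> (0 < compf ER x <= C)%nat.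
Proof.
  intros Hx. destruct (component_bounded x Hx) as [n [Hn HnC]].
  destruct (enum_spec _ (card_finite _ _ Hn)) as [_ Hl].
  assert (Hin : In x (enum (component ER x))) by (apply Hl, rt_refl).
  rewrite <- (compf_eq x n Hn) in HnC. unfold compf in *.
  destruct (enum (component ER x)); simpl in *; [contradiction|lia].
Qed.

(* The share of the excess deg/2 - alpha of a vertex of degree k that goes to each
   of the n vertices of its component. *)
Definition share (k n : nat) : R := (INR k / 2 - alpha) / INR n.

Lemma received_total_nonneg x : VR x ->
  0 <= sumR (enum (component ER x)) (fun y => share (degf ER y) (compf ER x)).
Proof.
  intros Hx. destruct (Hcomp x Hx) as [n [m [Hn [_ [Hmd Halpha]]]]].
  pose proof (handshake ER x m (schreier_locally_finite act gens VR ER Hsub)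
                (card_finite _ _ Hn) Hmd) as Hhs.
  assert (Hpos : 0 < INR n)
    by (apply lt_0_INR; rewrite <- (compf_eq x n Hn); apply compf_range, Hx).
  unfold share. rewrite (compf_eq x n Hn), (sumR_ext _ _ (fun y => / (2 * INR n) * INR (degf ER y) + - alpha / INR n))
    by (intros; field; lra).
  rewrite sumR_plus, sumR_scal, sumR_const, <- Hhs.
  fold (compf ER x). rewrite (compf_eq x n Hn).
  replace (INR n * (- alpha / INR n)) with (- alpha) by (field; lra).
  replace (/ (2 * INR n) * INR m) with (INR m / 2 / INR n) by (field; lra).
  lra.
Qed.

Definition piece (i k n : nat) (x : X) : Prop :=
  ((VR x /\ hit x i) /\ k = degf ER (act (w i) x)) /\ n = compf ER x.

(* Indexing by word, degree and component size: the ranges are finite because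
   degrees are bounded by |S| and components by C. *)
Definition pieces {A : Type} (F : nat -> nat -> nat -> A) : list A :=
  grid3 (length W) (S D) (S C) F.

(* At most one degree and one component size are relevant at a given point. *)
Lemma piece_select i x :
  sumR (seq 0 (S D)) (fun k => sumR (seq 0 (S C)) (fun n => ind (piece i k n x) * share k n))
  = ind (VR x /\ hit x i) * share (degf ER (act (w i) x)) (compf ER x).
Proof.
  rewrite (sumR_ext _ _ (fun k => ind ((VR x /\ hit x i) /\ k = degf ER (act (w i) x))
                                  * share k (compf ER x))).
  - apply (sumR_select _ _ _ (fun k => share k (compf ER x))).
    intros _. apply (schreier_degf_bound act gens VR ER Hsub).
  - intros k _. apply (sumR_select _ _ _ (share k)).
    intros [[Hx _] _]. apply compf_range, Hx.
Qed.

(* The simple function giving every point the shares it receives ... *)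
Definition received : list (R * (X -> Prop)) :=
  pieces (fun i k n => (share k n, piece i k n)).
(* ... the same pieces moved back by the words that carried them ... *)
Definition sent : list (R * (X -> Prop)) :=
  pieces (fun i k n => (share k n, act_image act (w i) (piece i k n))).
Definition excess : list (R * (X -> Prop)) :=
  map (fun k => (INR k / 2, fun x => deg_eq ER x k)) (seq 0 (S D)) ++ (- alpha, VR) :: nil.

Lemma value_received_nonneg x : 0 <= value received x.
Proof.
  unfold value, received, pieces. rewrite sumR_grid3. cbn [fst snd].
  rewrite (sumR_ext _ _ (fun i => ind (VR x /\ hit x i) * share (degf ER (act (w i) x)) (compf ER x)))
    by (intros i _; apply piece_select).
  destruct (classic (VR x)) as [Hx|Hx].
  - destruct (component_bounded x Hx) as [n [Hn HnC]].
    rewrite (sumR_ext _ _ (fun i => ind (hit x i) * share (degf ER (act (w i) x)) (compf ER x)))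
      by (intros i _; f_equal; apply ind_iff; tauto).
    rewrite (hits_enumerate_component e mul act gens VR ER C n x
               (fun y => share (degf ER y) (compf ER x))) by auto.
    apply received_total_nonneg, Hx.
  - rewrite sumR_zero; [lra|]. intros i _. rewrite ind_false by tauto. lra.
Qed.

(* A point y receives from the piece of index i exactly when w_i^-1 y first hits y;
   the share is then computed at y itself. *)
Lemma sent_term i y :
  ind (VR (act (inv (w i)) y) /\ hit (act (inv (w i)) y) i) *
    share (degf ER (act (w i) (act (inv (w i)) y))) (compf ER (act (inv (w i)) y))
  = ind (VR y /\ hit (act (inv (w i)) y) i) * share (degf ER y) (compf ER y).
Proof.
  set (x := act (inv (w i)) y).
  assert (Hy : act (w i) x = y) by (apply (act_inv_r e mul inv); auto).
  rewrite Hy. destruct (classic (hit x i)) as [Hh|Hh].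
  - assert (Hxy : component ER x y) by (rewrite <- Hy; apply Hh).
    assert (HVR : VR x <-> VR y).
    { split; intros H; eapply (schreier_component_VR act gens VR ER Hsub); eauto.
      apply (component_sym ER (proj1 Hsub)), Hxy. }
    destruct (classic (VR x)) as [Hx|Hx].
    + rewrite !ind_true by tauto.
      destruct (component_bounded x Hx) as [n [Hn _]].
      rewrite (compf_same ER (proj1 Hsub) x y (card_finite _ _ Hn) Hxy). reflexivity.
    + rewrite !ind_false by tauto. lra.
  - rewrite !ind_false by tauto. lra.
Qed.

Lemma value_sent y : value sent y = ind (VR y) * (INR (degf ER y) / 2 - alpha).
Proof.
  unfold value, sent, pieces. rewrite sumR_grid3. cbn [fst snd].
  rewrite (sumR_ext _ _ (fun i => share (degf ER y) (compf ER y) *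
                                  ind (VR y /\ hit (act (inv (w i)) y) i))).
  2:{ intros i _. rewrite Rmult_comm, <- sent_term, <- piece_select.
      apply sumR_ext; intros k _; apply sumR_ext; intros n _. f_equal.
      apply ind_iff, (act_image_iff e mul inv); auto. }
  rewrite sumR_scal. destruct (classic (VR y)) as [Hy|Hy].
  - destruct (component_bounded y Hy) as [n [Hn HnC]].
    rewrite (sumR_ext _ _ (fun i => ind (hit (act (inv (w i)) y) i) * 1))
      by (intros; rewrite Rmult_1_r; apply ind_iff; tauto).
    rewrite (hits_count_translates e mul inv act gens VR ER C n y), ind_true by auto.
    assert (Hpos : 0 < INR (compf ER y)) by (apply lt_0_INR, compf_range, Hy).
    unfold share. field. lra.
  - rewrite sumR_zero, ind_false by (auto || (intros i _; apply ind_false; tauto)). lra.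
Qed.

Lemma value_excess x : value excess x = ind (VR x) * (INR (degf ER x) / 2 - alpha).
Proof.
  assert (Hlf := schreier_locally_finite act gens VR ER Hsub).
  unfold excess, value. rewrite sumR_app, sumR_map. cbn [fst snd sumR].
  rewrite (sumR_ext _ _ (fun k => ind (True /\ k = degf ER x) * (INR k / 2))).
  - rewrite sumR_select, ind_true by (auto || (intros _; apply (schreier_degf_bound act gens VR ER Hsub))).
    destruct (classic (VR x)) as [Hx|Hx].
    + rewrite ind_true by auto. lra.
    + rewrite ind_false, (schreier_degf_off act gens VR ER Hsub x Hx) by auto. simpl. lra.
  - intros k _. f_equal. apply ind_iff. rewrite (deg_eq_iff ER x k Hlf). tauto.
Qed.

(* Invariance of the mean: moving the pieces does not change the integral. *)
Lemma integral_sent : integral mu sent = integral mu received.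
Proof.
  unfold integral, sent, received, pieces. rewrite !sumR_grid3.
  apply sumR_ext; intros i _; apply sumR_ext; intros k _; apply sumR_ext; intros n _.
  cbn [fst snd]. rewrite Hinv. reflexivity.
Qed.

Lemma integral_excess : integral mu excess = mu_E mu ER D - alpha * mu VR.
Proof.
  unfold integral, excess, mu_E. rewrite sumR_app, sumR_map, sum_f_R0_sumR, <- sumR_scal.
  cbn [fst snd sumR].
  rewrite (sumR_ext _ (fun k => INR k / 2 * mu (fun x => deg_eq ER x k))
             (fun k => / 2 * (INR k * mu (fun x => deg_eq ER x k)))) by (intros; field).
  lra.
Qed.

(* The excess has nonnegative integral: it equals the moved received shares. *)
Lemma excess_integral_nonneg : 0 <= integral mu excess.
Proof.
  apply Rle_trans with (integral mu sent).
  - rewrite integral_sent. apply (integral_nonneg mu Hm), value_received_nonneg.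
  - apply (integral_mono mu Hm). intros x. rewrite value_sent, value_excess. lra.
Qed.

End Transport.

Theorem lemma3p2
  (G X : Type) (e : G) (mul : G -> G -> G) (inv : G -> G) (act : G -> X -> X)
  (S : list G) (mu : (X -> Prop) -> R)
  (VR : X -> Prop) (ER : X -> X -> Prop) (C : nat) (alpha : R) :
  is_group e mul inv ->
  is_action e mul act ->
  sym_gen_set e mul inv S ->
  countably_infinite X ->
  is_mean mu ->
  invariant_mean act mu ->
  schreier_subgraph act S VR ER ->
  (forall x, VR x ->
     exists n m : nat,
       card_eq (component ER x) n /\ (n <= C)%nat /\
       card_eq (component_darts ER x) m /\
       alpha <= (INR m / 2) / INR n) ->
  alpha * mu VR <= mu_E mu ER (length S).
Proof.
  intros Hg Ha _ _ Hm Hinv Hsub Hcomp.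
  pose proof (excess_integral_nonneg G X e mul inv act S mu VR ER C alpha
                Hg Ha Hm Hinv Hsub Hcomp) as Hnonneg.
  rewrite integral_excess in Hnonneg. lra.
Qed.
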